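(* Let $\Omega$ be a region of $\mathcal{C}^*_{n,A}$ ($n\ge1$) and let $G_1(\Omega)$ be the graph on $[n]$ in which $\{i,j\}$ ($i\ne j$) is an edge iff $|x_i-x_j|<a_1$ for $\bm x\in\Omega$ (this does not depend on $\bm x\in\Omega$). Then $\mathrm{level}(\Omega)$ equals the number of connected components of $G_1(\Omega)$.
   Context: Let $A=\{a_1,\dots,a_m\}$ with $a_1>\dots>a_m>0$; $\mathcal{C}^*_{n,A}$ is the arrangement in $\mathbb{R}^n$ of hyperplanes $x_i-x_j=a_k$ ($i\ne j$, $1\le k\le m$); regions are connected components of the complement. The level of $X\subseteq\mathbb{R}^n$ is the smallest integer $\ell\ge0$ such that there are a linear subspace $W$ of dimension $\ell$ and $r>0$ with $X\subseteq\{\bm x:\min_{\bm y\in W}\|\bm x-\bm y\|\le r\}$. ($G_1(\Omega)$ is the incomparability graph of the interval order on $[n]$ given by $i<j$ iff $[x_i-a_1,x_i]$ lies entirely left of $[x_j-a_1,x_j]$.) *)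

From HB Require Import structures.
From mathcomp Require Import all_boot all_order all_algebra.
From mathcomp Require Import all_classical all_reals all_analysis.
Import numFieldNormedType.Exports.
Set Implicit Arguments. Unset Strict Implicit. Unset Printing Implicit Defensive.
Import Order.TTheory GRing.Theory Num.Theory.
Local Open Scope classical_set_scope.
Local Open Scope ring_scope.

(* Points of R^n are row vectors 'rV[R]_n (with their canonical topology);
   coordinate i of x is x ord0 i.  The set A = {a_1 > ... > a_m} is given as
   a : 'I_m -> R, a_1 = a k0 with k0 the first index. *)

Definition arr_compl (R : realType) (n m : nat) (a : 'I_m -> R) : set 'rV[R]_n :=
  [set x | forall (i j : 'I_n) (k : 'I_m), i != j -> x ord0 i - x ord0 j != a k].

Definition is_region (R : realType) (n m : nat) (a : 'I_m -> R)
  (Om : set 'rV[R]_n) : Prop :=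
  exists2 x, arr_compl a x & Om = connected_component (arr_compl a) x.

Definition edist (R : realType) (n : nat) (x y : 'rV[R]_n) : R :=
  Num.sqrt (\sum_(i < n) (x ord0 i - y ord0 i) ^+ 2).

(* X lies within distance r of the linear subspace W (the row space of the
   matrix W): min_{y in W} ||x - y|| <= r for all x in X (the min is attained). *)
Definition within_tube (R : realType) (n : nat) (X : set 'rV[R]_n)
  (W : 'M[R]_n) (r : R) : Prop :=
  forall x, X x -> exists2 y : 'rV[R]_n, (y <= W)%MS & edist x y <= r.

Definition level_witness (R : realType) (n : nat) (X : set 'rV[R]_n) (l : nat) : Prop :=
  exists W : 'M[R]_n, \rank W = l /\ exists2 r : R, 0 < r & within_tube X W r.

Definition is_level (R : realType) (n : nat) (X : set 'rV[R]_n) (l : nat) : Prop :=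
  level_witness X l /\ forall l', level_witness X l' -> (l <= l')%N.

Definition G1 (R : realType) (n : nat) (a1 : R) (x : 'rV[R]_n) : rel 'I_n :=
  fun i j => (i != j) && (`|x ord0 i - x ord0 j| < a1).

From Pilot Require Import Defs.
From HB Require Import structures.
From mathcomp Require Import all_boot all_order all_algebra.
From mathcomp Require Import all_classical all_reals all_analysis.
From mathcomp Require Import lra.
Set Implicit Arguments. Unset Strict Implicit. Unset Printing Implicit Defensive.
Import numFieldNormedType.Exports.
Import Order.TTheory GRing.Theory Num.Theory.
Local Open Scope classical_set_scope.
Local Open Scope ring_scope.

(* G1 is constant on a region, since there no difference x_i - x_j can reach
   +-a_1.  Its components are intervals of coordinates, of diameter at most
   n a_1.  Upper bound: replacing every coordinate of a point by that of the
   root of its component moves it by at most n^2 a_1, and lands in the span of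
   the component indicators, whose dimension is the number of components.
   Lower bound: the indicator of a component C is 1_U - 1_V, where U (resp. V)
   is the set of indices lying weakly above some (resp. strictly above every)
   coordinate of C.  Both are upward closed unions of components, hence
   separated from their complements by gaps larger than a_1, so translating
   them upward never meets a hyperplane: the rays x + t 1_U and x + t 1_V stay
   in the region, which forces 1_U and 1_V into any subspace whose tube
   contains it. *)

Section ConnectivityMatrix.
Variables (F : fieldType) (n : nat) (e : rel 'I_n).
Hypothesis sym_e : connect_sym e.

Definition indv (S : pred 'I_n) : 'rV[F]_n := \row_j (S j)%:R.

Definition conn_mx : 'M[F]_n := \matrix_(i, j) (connect e i j)%:R.

Lemma row_conn_mx i : row i conn_mx = indv (connect e i).
Proof. by apply/rowP => j; rewrite !mxE. Qed.

Let root_of (c : 'I_#|roots e|) : 'I_n := enum_val c.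

Lemma mxsub_roots_conn_mx : mxsub root_of root_of conn_mx = 1%:M.
Proof.
apply/matrixP => c c'; rewrite !mxE -(root_connect sym_e).
have rootK (d : 'I_#|roots e|) : fingraph.root e (root_of d) = root_of d.
  exact/eqP/(enum_valP d).
by rewrite !rootK (inj_eq enum_val_inj).
Qed.

Lemma rank_conn_mx : \rank conn_mx = #|roots e|.
Proof.
apply/eqP; rewrite eqn_leq; apply/andP; split.
  have sub_roots : (conn_mx <= rowsub root_of conn_mx)%MS.
    apply/row_subP => i.
    have rooti : fingraph.root e i \in roots e by apply: roots_root sym_e i.
    pose c := enum_rank_in rooti (fingraph.root e i).
    have -> : row i conn_mx = row c (rowsub root_of conn_mx).
      rewrite row_rowsub !row_conn_mx /root_of enum_rankK_in //; apply/rowP => j.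
      by rewrite !mxE (same_connect sym_e (connect_root e i)).
    exact: row_sub.
  exact: leq_trans (mxrankS sub_roots) (rank_leq_row _).
rewrite -{1}(mxrank1 F #|roots e|) -mxsub_roots_conn_mx mxsubrc.
apply: leq_trans (mxrankS (rowsub_sub _ _)) _.
by rewrite -[X in colsub _ X]mulmx1 -mulmx_colsub mxrankM_maxl.
Qed.

Lemma root_coord_sub_conn_mx (v : 'rV[F]_n) :
  (\row_j v ord0 (fingraph.root e j) <= conn_mx)%MS.
Proof.
have -> : \row_j v ord0 (fingraph.root e j)
    = (\row_i ((roots e i)%:R * v ord0 i)) *m conn_mx.
  apply/rowP => j.
  rewrite !mxE (bigD1 (fingraph.root e j)) ?(roots_root sym_e) //=.
  rewrite big1 ?addr0 => [|i neq_i].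
    by rewrite !mxE (roots_root sym_e) sym_e connect_root /= !mulr1n mul1r mulr1.
  rewrite !mxE; case rooti: (roots e i); last by rewrite mul0r mul0r.
  case: (boolP (connect e i j)) => [/(fingraph.rootP sym_e) eq_root|_].
    by move: neq_i; rewrite -eq_root (eqP rooti) eqxx.
  by rewrite mulr0.
exact: submxMl.
Qed.

End ConnectivityMatrix.

Arguments indv {F n} S.
Arguments conn_mx {F n} e.

Section IntervalGraph.
Variables (R : realType) (n : nat) (a1 : R) (x : 'rV[R]_n).
Local Notation e := (G1 a1 x).

Lemma G1_sym : symmetric e.
Proof. by move=> i j; rewrite /G1 eq_sym distrC. Qed.

Lemma connect_G1_sym : connect_sym e.
Proof. exact: sym_connect_sym G1_sym. Qed.

Lemma G1_near i j : i != j -> `|x ord0 i - x ord0 j| < a1 -> e i j.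
Proof. by move=> neq_ij lt_ij; rewrite /G1 neq_ij. Qed.

Hypothesis a1_gt0 : 0 < a1.

Lemma connect_G1_between r i j l :
  connect e r i -> connect e r l ->
  x ord0 i <= x ord0 j -> x ord0 j <= x ord0 l -> connect e r j.
Proof.
move=> ri rl le_ij le_jl; apply: contraT => not_rj.
have [eq_xij|neq_xij] := eqVneq (x ord0 i) (x ord0 j).
  have [eq_ij|neq_ij] := eqVneq i j; first by move: not_rj; rewrite -eq_ij ri.
  case/negP: not_rj; apply: (connect_trans ri); apply/connect1/G1_near => //.
  by rewrite eq_xij subrr normr0.
have lt_ij : x ord0 i < x ord0 j by rewrite lt_neqAle neq_xij.
pose P : pred 'I_n := [pred p | connect e r p && (x ord0 p < x ord0 j)].
have closedP : fingraph.closed e P.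
  apply: (intro_closed connect_G1_sym) => p q epq /andP[rp lt_pj].
  have rq := connect_trans rp (connect1 epq); rewrite inE rq ltNge /=.
  apply: contra not_rj => le_jq; apply: (connect_trans rp); apply/connect1/G1_near.
    by apply: contraTneq lt_pj => ->; rewrite ltxx.
  move: epq => /andP[_]; rewrite !ltr_norml => /andP[? ?]; apply/andP; split; lra.
have il : connect e i l by apply: connect_trans rl; rewrite connect_G1_sym.
have := closed_connect closedP il.
by rewrite !inE ri rl lt_ij ltNge le_jl.
Qed.

Lemma path_G1_dist u p :
  path e u p -> `|x ord0 u - x ord0 (last u p)| <= (size p)%:R * a1.
Proof.
elim: p u => [|q p IHp] u /=; first by rewrite subrr normr0 mul0r.
case/andP=> /andP[_ lt_uq] pq; apply: le_trans (ler_distD (x ord0 q) _ _) _.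
by rewrite -[(size p).+1]add1n natrD mulrDl mul1r lerD ?(ltW lt_uq) ?IHp.
Qed.

Lemma connect_G1_dist i j : connect e i j -> `|x ord0 i - x ord0 j| <= n%:R * a1.
Proof.
case/connectP => p pth ->; case/shortenP: pth => p' pth' uniq_p' _.
apply: le_trans (path_G1_dist pth') _; rewrite ler_wpM2r ?(ltW a1_gt0) // ler_nat.
have := max_card (mem (i :: p')).
by rewrite card_ord (card_uniqP uniq_p') => /ltnW.
Qed.

End IntervalGraph.

Section UpperSets.
Variables (R : realType) (n : nat) (a1 : R) (x : 'rV[R]_n).
Local Notation e := (G1 a1 x).

Definition upward_closed (S : pred 'I_n) :=
  forall j l, S j -> x ord0 j <= x ord0 l -> S l.

Definition up_set (C : pred 'I_n) : pred 'I_n :=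
  [pred j | [exists i in C, x ord0 i <= x ord0 j]].

Definition strict_up_set (C : pred 'I_n) : pred 'I_n :=
  [pred j | [forall i in C, x ord0 i < x ord0 j]].

Lemma up_set_upward C : upward_closed (up_set C).
Proof.
move=> j l /existsP[i /andP[Ci le_ij]] le_jl.
by apply/existsP; exists i; rewrite Ci (le_trans le_ij le_jl).
Qed.

Lemma strict_up_set_upward C : upward_closed (strict_up_set C).
Proof.
move=> j l /forallP lt_Cj le_jl; apply/forallP => i.
by apply/implyP => Ci; rewrite (lt_le_trans (implyP (lt_Cj i) Ci) le_jl).
Qed.

Lemma up_set_closed C : fingraph.closed e C -> fingraph.closed e (up_set C).
Proof.
move=> closedC; apply: (intro_closed (connect_G1_sym a1 x)) => j l ejl.
rewrite !inE => /existsP[i /andP[Ci le_ij]]; apply/existsP.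
have [le_il|lt_li] := leP (x ord0 i) (x ord0 l); first by exists i; rewrite Ci.
exists l; rewrite lexx andbT -(closedC i) //; apply: G1_near.
  by apply: contraTneq lt_li => ->; rewrite ltxx.
by move: ejl => /andP[_]; rewrite !ltr_norml => /andP[? ?]; apply/andP; split; lra.
Qed.

Lemma strict_up_set_closed C :
  fingraph.closed e C -> fingraph.closed e (strict_up_set C).
Proof.
move=> closedC; apply: (intro_closed (connect_G1_sym a1 x)) => j l ejl.
rewrite !inE => /forallP lt_Cj; apply/forallP => i; apply/implyP => Ci.
rewrite ltNge; apply/negP => le_li.
have lt_ij := implyP (lt_Cj i) Ci.
have Cj : j \in C.
  rewrite (closedC i j) // in Ci; apply: G1_near.
    by apply: contraTneq lt_ij => ->; rewrite ltxx.
  by move: ejl => /andP[_]; rewrite !ltr_norml => /andP[? ?]; apply/andP; split; lra.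
by move: (implyP (lt_Cj j) Cj); rewrite ltxx.
Qed.

Hypothesis a1_gt0 : 0 < a1.

Lemma indv_component r :
  indv (connect e r)
  = indv (up_set (connect e r)) - indv (strict_up_set (connect e r)) :> 'rV[R]_n.
Proof.
apply/rowP => j; rewrite !mxE.
have [rj|not_rj] := boolP (connect e r j).
  have -> : up_set (connect e r) j by apply/existsP; exists j; rewrite inE rj /=.
  have -> : strict_up_set (connect e r) j = false.
    by apply/negP => /forallP/(_ j); rewrite inE rj ltxx.
  by rewrite subr0.
have [up_j|not_up_j] := boolP (up_set (connect e r) j); last first.
  suff -> : strict_up_set (connect e r) j = false by rewrite subrr.
  apply: contraNF not_up_j => /forallP/(_ r); rewrite inE connect0 => /ltW le_rj.
  by apply/existsP; exists r; rewrite inE connect0.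
have [_|/forallPn[l]] := boolP (strict_up_set (connect e r) j).
  by rewrite subrr.
rewrite negb_imply -leNgt => /andP[rl le_jl].
case/existsP: up_j => i /andP[ri le_ij].
by rewrite (connect_G1_between a1_gt0 ri rl le_ij le_jl) in not_rj.
Qed.

End UpperSets.

Lemma coord_le_edist (R : realType) n (p q : 'rV[R]_n) i :
  `|p ord0 i - q ord0 i| <= Defs.edist p q.
Proof.
rewrite /Defs.edist -sqrtr_sqr ler_wsqrtr // (bigD1 i) //= lerDl.
by apply: sumr_ge0 => j _; rewrite sqr_ge0.
Qed.

Lemma edist_le_coord (R : realType) n (p q : 'rV[R]_n) (B : R) :
  0 <= B -> (forall i, `|p ord0 i - q ord0 i| <= B) -> Defs.edist p q <= n%:R * B.
Proof.
move=> B_ge0 le_pqB; rewrite /Defs.edist -(ger0_norm (mulr_ge0 (ler0n R n) B_ge0)).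
rewrite -sqrtr_sqr ler_wsqrtr //; apply: (le_trans (y := \sum_(i < n) B ^+ 2)).
- apply: ler_sum => i _; rewrite -real_normK ?num_real // lerXn2r ?nnegrE //.
- rewrite sumr_const card_ord exprMn -[B ^+ 2 *+ n]mulr_natl ler_wpM2r ?sqr_ge0 //.
  by rewrite -natrX ler_nat; case: (n) => // k; rewrite expnS leq_pmulr // expn_gt0.
Qed.

Lemma within_tube_ray_sub (R : realType) n (X : set 'rV[R]_n) (W : 'M[R]_n) r
    (x u : 'rV[R]_n) :
  within_tube X W r -> (forall s, 0 <= s -> X (x + s *: u)) -> (u <= W)%MS.
Proof.
move=> tubeX rayX; rewrite submxE; apply/eqP/rowP => j; rewrite [RHS]mxE.
set L := cokermx W; pose K := \sum_(l < n) `|L l j|.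
(* cokermx W kills W, so p *m L is bounded on X, but grows linearly along
   the ray unless u *m L = 0 *)
have bnd p : X p -> `|(p *m L) ord0 j| <= r * K.
  case/tubeX => y yW le_pyr; have yL : y *m L = 0 by apply/eqP; rewrite -submxE.
  rewrite -[p](subrK y) mulmxDl yL addr0 mxE.
  apply: le_trans (ler_norm_sum _ _ _) _.
  rewrite /K mulr_sumr; apply: ler_sum => l _.
  by rewrite normrM ler_wpM2r // (le_trans _ le_pyr) // !mxE coord_le_edist.
set c := (u *m L) ord0 j; set d := (x *m L) ord0 j.
have rK_ge0 : 0 <= r * K := le_trans (normr_ge0 _) (bnd _ (rayX 0 (lexx 0))).
apply/eqP; apply: contraT => c_neq0.
pose s := (r * K + `|d| + 1) / `|c|.
have s_ge0 : 0 <= s by rewrite divr_ge0 // addr_ge0 // addr_ge0.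
have sc : `|s * c| = r * K + `|d| + 1.
  by rewrite normrM ger0_norm // /s -mulrA mulVf ?mulr1 // normr_eq0.
have := bnd _ (rayX s s_ge0).
rewrite mulmxDl -scalemxAl mxE [X in _ + X]mxE -/c -/d.
have := ler_normB (d + s * c) d; rewrite addrAC subrr add0r sc; lra.
Qed.

Lemma connected_ltr_notin (R : realType) (S : set R) (p q c : R) :
  connected S -> S p -> S q -> ~ S c -> (p < c) = (q < c).
Proof.
move=> /connected_intervalP itvS Sp Sq notSc.
have cross u v : S u -> S v -> u < c -> c <= v -> False.
  by move=> Su Sv lt_uc le_cv; apply/notSc/(itvS u v) => //; rewrite (ltW lt_uc).
case: (ltP p c) => ?; case: (ltP q c) => ? //.
  by case: (cross p q).
by case: (cross q p).
Qed.

Section Regions.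
Variables (R : realType) (n m : nat) (a : 'I_m -> R).

Lemma G1_constant_on_connected (C : set 'rV[R]_n) k :
  connected C -> C `<=` arr_compl a ->
  forall x y, C x -> C y -> G1 (a k) y =2 G1 (a k) x.
Proof.
move=> connC CA x y Cx Cy i j; rewrite /G1; case: (i =P j) => //= /eqP neq_ij.
pose f (z : 'rV[R]_n) := z ord0 i - z ord0 j.
have connfC : connected (f @` C).
  apply: connected_continuous_connected => //; apply: continuous_subspaceT => z.
  by apply: continuousB; apply: coord_continuous.
(* on C the difference f avoids both a k and - a k, so |f| - a k keeps its sign *)
have notfC_a : ~ (f @` C) (a k).
  by case=> z Cz fz; move: (CA z Cz i j k neq_ij); rewrite -/(f z) fz eqxx.
have notfC_Na : ~ (f @` C) (- a k).
  case=> z Cz fz; move: (CA z Cz j i k); rewrite eq_sym => /(_ neq_ij).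
  by rewrite -opprB -/(f z) fz opprK eqxx.
have fCx : (f @` C) (f x) by exists x.
have fCy : (f @` C) (f y) by exists y.
have normE d : (f @` C) d -> (`|d| < a k) = ~~ (d < - a k) && (d < a k).
  move=> fCd; rewrite ltr_norml -leNgt le_eqVlt; congr (_ && _).
  by case: eqP => // dE; case: notfC_Na; rewrite dE.
rewrite -/(f y) -/(f x) (normE _ fCx) (normE _ fCy).
by rewrite !(connected_ltr_notin connfC fCx fCy) //.
Qed.

Lemma connected_component_ray (x v : 'rV[R]_n) :
  (forall t, 0 <= t -> arr_compl a (x + t *: v)) ->
  forall s, 0 <= s -> connected_component (arr_compl a) x (x + s *: v).
Proof.
move=> rayA s s_ge0.
apply: (@connected_component_max _ _ ((fun t => x + t *: v) @` `[0, s])).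
- by exists 0; rewrite ?scale0r ?addr0 //= in_itv /= lexx s_ge0.
- by move=> p [t]; rewrite /= in_itv /= => /andP[t_ge0 _] <-; exact: rayA.
- apply: connected_continuous_connected; first exact: segment_connected.
  apply: continuous_subspaceT => t.
  exact: (continuousD (cvg_cst x) (@scalel_continuous R _ v t)).
- by exists s; rewrite //= in_itv /= s_ge0 lexx.
Qed.

Lemma region_component (Om : set 'rV[R]_n) x :
  is_region a Om -> Om x -> Om = connected_component (arr_compl a) x.
Proof. by case=> x0 _ -> Om_x; apply: same_connected_component. Qed.

End Regions.

Section Arrangement.
Variables (R : realType) (n m : nat) (a : 'I_m -> R) (k0 : 'I_m).

Lemma G1_gap x (S : pred 'I_n) :
  arr_compl a x -> upward_closed x S -> fingraph.closed (G1 (a k0) x) S ->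
  forall j l, S j -> ~~ S l -> a k0 < x ord0 j - x ord0 l.
Proof.
move=> xA upS closedS j l Sj notSl.
have lt_lj : x ord0 l < x ord0 j.
  by rewrite ltNge; apply: contra notSl; apply: upS.
have neq_jl : j != l by apply: contraTneq lt_lj => ->; rewrite ltxx.
have : ~~ G1 (a k0) x j l.
  apply: contra notSl => ejl.
  by move: (closedS j l ejl); rewrite -!topredE /= Sj => <-.
rewrite /G1 neq_jl /= ger0_norm ?subr_ge0 ?(ltW lt_lj) // -leNgt le_eqVlt.
by case/orP => // /eqP eq_a; move: (xA j l k0 neq_jl); rewrite eq_a eqxx.
Qed.

Hypothesis a_bounded : forall k, `|a k| <= a k0.

Lemma arr_compl_shift x (S : pred 'I_n) t :
  arr_compl a x -> upward_closed x S -> fingraph.closed (G1 (a k0) x) S ->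
  0 <= t -> arr_compl a (x + t *: indv S).
Proof.
move=> xA upS closedS t_ge0 i j k neq_ij; rewrite !mxE.
have gap := G1_gap xA upS closedS.
have := a_bounded k; rewrite ler_norml => /andP[? ?].
case Si: (S i); case Sj: (S j); rewrite /= ?mulr1n ?mulr0n ?mulr1 ?mulr0 ?addr0.
- by apply: contra (xA i j k neq_ij) => /eqP eq_a; apply/eqP; lra.
- by have := gap i j Si (negbT Sj); apply: contraTneq => ?; lra.
- by have := gap j i Sj (negbT Si); apply: contraTneq => ?; lra.
- exact: xA.
Qed.

Hypothesis a_k0_gt0 : 0 < a k0.

Lemma conn_mx_G1_sub_tube x (X : set 'rV[R]_n) (W : 'M[R]_n) r :
  arr_compl a x -> connected_component (arr_compl a) x `<=` X ->
  within_tube X W r -> (conn_mx (G1 (a k0) x) <= W)%MS.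
Proof.
move=> xA compX tubeX.
have ray_sub S : upward_closed x S -> fingraph.closed (G1 (a k0) x) S ->
    (indv S <= W)%MS.
  move=> upS closedS; apply: (within_tube_ray_sub (x := x) tubeX) => s s_ge0.
  by apply/compX/connected_component_ray => // t t_ge0; apply: arr_compl_shift.
have closedC i := connect_closed (connect_G1_sym (a k0) x) i.
apply/row_subP => i; rewrite row_conn_mx indv_component //.
apply: addmx_sub; last rewrite eqmx_opp.
- by apply: ray_sub; [apply: up_set_upward | apply: up_set_closed].
- by apply: ray_sub; [apply: strict_up_set_upward | apply: strict_up_set_closed].
Qed.

End Arrangement.

Lemma within_tube_conn_mx_G1 (R : realType) n (a1 : R) (x : 'rV[R]_n)
    (X : set 'rV[R]_n) :
  0 < a1 -> (forall y, X y -> G1 a1 y =2 G1 a1 x) ->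
  within_tube X (conn_mx (G1 a1 x)) (n%:R * (n%:R * a1)).
Proof.
move=> a1_gt0 G1X y Xy; exists (\row_j y ord0 (fingraph.root (G1 a1 x) j)).
  exact: root_coord_sub_conn_mx (connect_G1_sym a1 x) y.
apply: edist_le_coord => [|j]; first exact: mulr_ge0 (ler0n _ _) (ltW a1_gt0).
rewrite mxE; apply: (connect_G1_dist a1_gt0).
by rewrite (eq_connect (G1X y Xy)) connect_root.
Qed.

Theorem theorem3p4 (R : realType) (n m : nat) (a : 'I_m.+1 -> R)
  (hn : (1 <= n)%N)
  (a_pos : forall k, 0 < a k)
  (a_decr : forall k l : 'I_m.+1, (k < l)%N -> a l < a k)
  (Om : set 'rV[R]_n) (hOm : is_region a Om)
  (x : 'rV[R]_n) (hx : Om x) :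
  is_level Om (n_comp (G1 (a ord0) x) 'I_n).
Proof.
have a_bounded k : `|a k| <= a ord0.
  rewrite ger0_norm ?(ltW (a_pos k)) //.
  have [k_eq0|k_gt0] := posnP k; last exact/ltW/a_decr.
  by rewrite (_ : k = ord0) //; apply/val_inj.
have OmE := region_component hOm hx.
have OmA : Om `<=` arr_compl a by rewrite OmE; apply: connected_component_sub.
have G1Om : forall y, Om y -> G1 (a ord0) y =2 G1 (a ord0) x.
  move=> y Om_y; apply: (G1_constant_on_connected _ _ OmA hx Om_y).
  by rewrite OmE; apply: component_connected.
have -> : n_comp (G1 (a ord0) x) 'I_n = \rank (conn_mx (G1 (a ord0) x) : 'M[R]_n).
  rewrite rank_conn_mx; last exact: connect_G1_sym.
  by apply: eq_card => i; rewrite !inE andbT.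
split.
  exists (conn_mx (G1 (a ord0) x)); split => //.
  exists (n%:R * (n%:R * a ord0)); last exact: within_tube_conn_mx_G1.
  by rewrite !mulr_gt0 ?ltr0n.
move=> l [W [<- [r _ tubeW]]]; apply: mxrankS.
apply: (conn_mx_G1_sub_tube a_bounded (a_pos ord0) (OmA x hx) _ tubeW).
by rewrite OmE.
Qed.
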